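(* For any positive integers $q,z,m,t$ with $q\geq 2$, $z<q$ and $t<m$, there exists a $\big(\binom{m}{t}q^t\lfloor\frac{q-1}{q-z}\rfloor^t,\ q^m,\ q^m-(q-z)^tq^{m-t},\ (q-z)^tq^m\big)$ placement delivery array. In particular there is a corresponding coded caching scheme with $\frac{M}{N}=1-(\frac{q-z}{q})^t$ and rate $R=(q-z)^t$.
   Context: A $(K,F,Z,S)$ placement delivery array (PDA) is an $F\times K$ array whose entries are either a special symbol $*$ or one of $S$ distinct non-star symbols (identified with $1,\ldots,S$), such that: (C1) $*$ appears exactly $Z$ times in each column; (C2) each of the $S$ symbols occurs at least once; (C3) for any two distinct entries $p_{j_1,k_1}=p_{j_2,k_2}=s$ with $s$ a non-star symbol, we have $j_1\neq j_2$, $k_1\neq k_2$, and $p_{j_1,k_2}=p_{j_2,k_1}=*$. A $(K,F,Z,S)$ PDA yields an $F$-division coded caching scheme for $K$ users with memory ratio $M/N=Z/F$ and rate $R=S/F$. *)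

From mathcomp Require Import all_boot.
Set Implicit Arguments. Unset Strict Implicit. Unset Printing Implicit Defensive.

(* A (K,F,Z,S) placement delivery array: an F x K array whose entries are
   either the star symbol (represented by [None]) or one of S non-star
   symbols (represented by [Some s], s : 'I_S). *)
Definition array (K F S : nat) := 'I_F -> 'I_K -> option 'I_S.

Definition is_PDA (K F Z S : nat) (P : array K F S) : Prop :=
  (forall k : 'I_K, #|[set j : 'I_F | P j k == None]| = Z) /\
  (forall s : 'I_S, exists j : 'I_F, exists k : 'I_K, P j k = Some s) /\
  (forall (j1 j2 : 'I_F) (k1 k2 : 'I_K) (s : 'I_S),
     (j1, k1) <> (j2, k2) -> P j1 k1 = Some s -> P j2 k2 = Some s ->
     [/\ j1 <> j2, k1 <> k2, P j1 k2 = None & P j2 k1 = None]).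

Definition PDA_exists (K F Z S : nat) : Prop :=
  exists P : array K F S, is_PDA Z P.

(* Rows are the words x in G^m over a finite abelian group G, here Z/q.  Fix
   disjoint blocks B_c = off c E in G \ {0}, here B_c = {cs+1, ..., cs+s} for
   s = q - z and c < a = (q-1) %/ s.  A column is a t-set T of coordinates with
   a word v and a block index c_l for each position l of T.  The cell
   (x, (T, v, c)) is filled iff x_i - v_l lies in B_(c_l) for the l-th element
   i of T, and then its symbol is (y, e): y is x overwritten by v on T, and e_l
   locates x_i - v_l inside its block.  So each column has s^t q^(m-t) filled
   cells, and a symbol together with (T, c) determines both row and column.
   Two cells with the same symbol therefore have different (T, c), and their
   crossed cells are empty: either some block index differs and the blocks are
   disjoint, or a coordinate in one T but not the other gives the difference
   0, which lies in no block. *)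

From mathcomp Require Import all_boot all_algebra zify.
Import GRing.Theory.
Set Implicit Arguments. Unset Strict Implicit. Unset Printing Implicit Defensive.

Definition is_fin_PDA (R Cl Y : finType) (Z : nat) (p : R -> Cl -> option Y) :=
  [/\ forall k, #|[set j | p j k == None]| = Z,
      forall s, exists j k, p j k = Some s
    & forall j1 j2 k1 k2 s, (j1, k1) <> (j2, k2) -> p j1 k1 = Some s -> p j2 k2 = Some s ->
      [/\ j1 <> j2, k1 <> k2, p j1 k2 = None & p j2 k1 = None]].

Lemma fin_PDA_exists (R Cl Y : finType) Z (p : R -> Cl -> option Y) :
  is_fin_PDA Z p -> PDA_exists #|Cl| #|R| Z #|Y|.
Proof.
case=> stars cover distinct.
pose P : array #|Cl| #|R| #|Y| := fun j k => omap enum_rank (p (enum_val j) (enum_val k)).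
have P_None j k : (P j k == None) = (p (enum_val j) (enum_val k) == None).
  by rewrite /P; case: (p _ _).
exists P; split; [|split].
- move=> k; rewrite -(stars (enum_val k)) -(card_imset _ (@enum_rank_inj R)).
  apply: eq_card => j.
  by rewrite -[j]enum_valK (mem_imset _ _ (@enum_rank_inj R)) !inE P_None enum_valK.
- move=> s; have [j [k E]] := cover (enum_val s).
  by exists (enum_rank j), (enum_rank k); rewrite /P !enum_rankK E /= enum_valK.
- move=> j1 j2 k1 k2 s ne; rewrite /P.
  case E1: p => [s1|] //= [<-]; case E2: p => [s2|] //= [/enum_rank_inj Es].
  rewrite {}Es in E2.
  have ne' : (enum_val j1, enum_val k1) <> (enum_val j2, enum_val k2).
    by case=> /enum_val_inj Ej /enum_val_inj Ek; apply: ne; rewrite Ej Ek.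
  have [nj nk -> ->] := distinct _ _ _ _ _ ne' E1 E2.
  by split=> // E; [apply: nj | apply: nk]; rewrite E.
Qed.

Section SubsetPositions.

Variables (I : finType) (t : nat).

Definition tsubset := {T : {set I} | #|T| == t}.

Implicit Type T : tsubset.

Lemma card_tsubset : #|{: tsubset}| = 'C(#|I|, t).
Proof. by rewrite card_sig -card_draws; apply: eq_card => T; rewrite inE. Qed.

Definition elts T : t.-tuple I := tcast (eqP (valP T)) (enum_tuple (val T)).

Definition elt T (l : 'I_t) : I := tnth (elts T) l.

Definition rank T (i : I) : option 'I_t := insub (index i (elts T)).

Lemma mem_elts T i : (i \in elts T) = (i \in val T).
Proof. by rewrite [in LHS]memtE val_tcast mem_enum. Qed.

Lemma mem_elt T l : elt T l \in val T.
Proof. by rewrite -mem_elts mem_tnth. Qed.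

Lemma rank_elt T l : rank T (elt T l) = Some l.
Proof.
have uniqT : uniq (elts T) by rewrite val_tcast enum_uniq.
by rewrite /rank /elt (tnth_nth (elt T l)) index_uniq ?size_tuple ?valK.
Qed.

Variant rank_spec T i : option 'I_t -> Type :=
  | RankSome l of elt T l = i : rank_spec T i (Some l)
  | RankNone of i \notin val T : rank_spec T i None.

Lemma rankP T i : rank_spec T i (rank T i).
Proof.
rewrite /rank; case: insubP => [l|]; rewrite -[t in _ < t](size_tuple (elts T)) index_mem.
  by move=> Ti El; apply: RankSome; rewrite /elt (tnth_nth i) El nth_index.
by rewrite mem_elts => /RankNone.
Qed.

Lemma tsubset_sub_eq T1 T2 : val T1 \subset val T2 -> T1 = T2.
Proof.
by move=> sub; apply/val_inj/eqP; rewrite eqEcard sub (eqP (valP T1)) (eqP (valP T2)) /=.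
Qed.

End SubsetPositions.

Lemma card_shift_codom (G : finZmodType) (E : finType) (f : E -> G) (v : G) :
  injective f -> #|[pred w | (w - v)%R \in codom f]| = #|E|.
Proof.
move=> f_inj; rewrite -(card_codom (inj_comp (addrI v) f_inj)).
apply: eq_card => w; rewrite inE; apply/codomP/codomP => -[e Ee]; exists e => /=.
  by rewrite -Ee addrC subrK.
by rewrite Ee /= addrC addKr.
Qed.

Section BlockPDA.

Variables (I : finType) (t : nat) (G : finZmodType) (C E : finType).
Variables (off : C -> E -> G) (dec : G -> E).
Hypotheses (offK : forall c, cancel (off c) dec)
  (off_disjoint : forall c1 c2 e1 e2, off c1 e1 = off c2 e2 -> c1 = c2)
  (off_neq0 : forall c e, off c e != 0%R).

Local Notation row := {ffun I -> G}.
Local Notation col := (tsubset I t * {ffun 'I_t -> G} * {ffun 'I_t -> C})%type.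
Local Notation sym := ({ffun I -> G} * {ffun 'I_t -> E})%type.

Implicit Types (x y : row) (T : tsubset I t) (v : {ffun 'I_t -> G}).
Implicit Types (c : {ffun 'I_t -> C}) (e : {ffun 'I_t -> E}).

Definition in_block x T v c : bool :=
  [forall l, (x (elt T l) - v l)%R \in codom (off (c l))].

Definition symbol x T v : sym :=
  ([ffun i => if rank T i is Some l then v l else x i],
   [ffun l => dec (x (elt T l) - v l)%R]).

Definition entry x (k : col) : option sym :=
  let: (T, v, c) := k in if in_block x T v c then Some (symbol x T v) else None.

Definition lift y e T c : row :=
  [ffun i => if rank T i is Some l then (y i + off (c l) (e l))%R else y i].

Definition restrict T y : {ffun 'I_t -> G} := [ffun l => y (elt T l)].

Lemma codom_offK (c : C) (d : G) : d \in codom (off c) -> off c (dec d) = d.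
Proof. by case/codomP => e ->; rewrite offK. Qed.

Lemma lift_restrict_diff y e T c l :
  (lift y e T c (elt T l) - restrict T y l)%R = off (c l) (e l).
Proof. by rewrite !ffunE rank_elt addrC addKr. Qed.

Lemma entry_lift y e T c : entry (lift y e T c) (T, restrict T y, c) = Some (y, e).
Proof.
rewrite /= /in_block; case: forallP => [_|[]l]; last first.
  by rewrite lift_restrict_diff codom_f.
congr (Some (_, _)); apply/ffunP => i.
  by rewrite !ffunE; case: rankP => [l <-|_]; rewrite ?ffunE.
by rewrite ffunE lift_restrict_diff offK.
Qed.

Lemma entry_Some x T v c y e :
  entry x (T, v, c) = Some (y, e) -> x = lift y e T c /\ v = restrict T y.
Proof.
rewrite /= /in_block; case: forallP => // blk [<- <-].
split; apply/ffunP => i; rewrite !ffunE; last by rewrite rank_elt.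
by case: rankP => [l <-|_] //; rewrite ffunE codom_offK ?blk // addrC subrK.
Qed.

Lemma entry_lift_other y e T1 T2 c1 c2 : (T1, c1) <> (T2, c2) ->
  entry (lift y e T1 c1) (T2, restrict T2 y, c2) = None.
Proof.
move=> ne; rewrite /= /in_block; case: forallP => // blk; exfalso.
have [eqT|] := eqVneq T1 T2.
  subst T2; apply: ne; congr pair; apply/ffunP => l.
  have /codomP[e' Ee'] := blk l.
  by rewrite lift_restrict_diff in Ee'; apply: off_disjoint Ee'.
move=> neT; have /subsetPn[i T2i T1'i] : ~~ (val T2 \subset val T1).
  by apply: contraNN neT => /tsubset_sub_eq ->.
case: (rankP T2 i) T2i => [l Ei _|/negP//].
have := blk l; rewrite !ffunE Ei; case: (rankP T1 i) => [l1 Ei1|_].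
  by rewrite -Ei1 mem_elt in T1'i.
by rewrite subrr => /codomP[e0 /esym/eqP]; apply/negP.
Qed.

Lemma card_in_block T v c :
  #|[set x | in_block x T v c]| = (#|E| ^ t * #|G| ^ (#|I| - t))%N.
Proof.
pose F i : pred G :=
  if rank T i is Some l then [pred w | (w - v l)%R \in codom (off (c l))] else predT.
have -> : #|[set x | in_block x T v c]| = #|family F|.
  apply: eq_card => x; rewrite inE; apply/forallP/familyP => blk i.
    by rewrite /F; case: (rankP T i) => [l <-|//]; rewrite unfold_in; apply: blk.
  by have := blk (elt T i); rewrite /F rank_elt.
rewrite card_family foldrE big_image (bigID (mem (val T))) /=.
rewrite (eq_bigr (fun=> #|E|)) => [|i]; last first.
  rewrite /F; case: (rankP T i) => [l <- _|/negP//].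
  exact/card_shift_codom/can_inj/offK.
rewrite [X in _ * X](eq_bigr (fun=> #|G|)) => [|i]; last first.
  by rewrite /F; case: (rankP T i) => [l <-|//]; rewrite mem_elt.
by rewrite !prod_nat_const (eqP (valP T)) -(cardC (val T)) (eqP (valP T)) addKn.
Qed.

Theorem block_fin_PDA (c0 : C) : t <= #|I| ->
  is_fin_PDA (#|G| ^ #|I| - #|E| ^ t * #|G| ^ (#|I| - t)) entry.
Proof.
move=> le_tI; split.
- case=> [[T v] c]; rewrite -(card_in_block T v c) -(card_ffun I G).
  rewrite -(cardsC [set x | in_block x T v c]) addKn.
  by apply: eq_card => x; rewrite !inE /=; case: in_block.
- case=> y e; have /card_gt0P[T _] : 0 < #|{: tsubset I t}|.
    by rewrite card_tsubset bin_gt0.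
  pose c := [ffun=> c0] : {ffun 'I_t -> C}.
  by exists (lift y e T c), (T, restrict T y, c); rewrite entry_lift.
- move=> x1 x2 [[T1 v1] c1] [[T2 v2] c2] [y e] ne E1 E2.
  have [x1E v1E] := entry_Some E1; have [x2E v2E] := entry_Some E2.
  subst x1 x2 v1 v2.
  have neTc : (T1, c1) <> (T2, c2) by case=> eT ec; apply: ne; rewrite eT ec.
  have N12 := entry_lift_other y e neTc.
  have N21 := entry_lift_other y e (fun E => neTc (esym E)).
  split=> // [E12|].
    by rewrite E12 E2 in N12.
  by case=> eT _ ec; apply: neTc; rewrite eT ec.
Qed.

Corollary block_PDA_exists (c0 : C) : t <= #|I| ->
  PDA_exists ('C(#|I|, t) * #|G| ^ t * #|C| ^ t) (#|G| ^ #|I|)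
    (#|G| ^ #|I| - #|E| ^ t * #|G| ^ (#|I| - t)) (#|E| ^ t * #|G| ^ #|I|).
Proof.
move=> le_tI; have := fin_PDA_exists (block_fin_PDA c0 le_tI).
by rewrite !card_prod card_tsubset !card_ffun card_ord [_ * #|E| ^ t]mulnC.
Qed.

End BlockPDA.

Section CyclicBlocks.

Variables (q s a : nat).
Hypotheses (q_gt1 : 1 < q) (s_gt0 : 0 < s) (as_lt_q : a * s < q).

Definition cyclic_off (c : 'I_a) (e : 'I_s) : 'Z_q := inZp (c * s + e).+1.

Definition cyclic_dec (d : 'Z_q) : 'I_s := Ordinal (ltn_pmod d.-1 s_gt0).

Lemma cyclic_off_lt (c : 'I_a) (e : 'I_s) : (c * s + e).+1 < q.
Proof. by have := ltn_ord c; have := ltn_ord e; nia. Qed.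

Lemma val_cyclic_off c e : val (cyclic_off c e) = (c * s + e).+1.
Proof. by rewrite /= Zp_cast // modn_small // cyclic_off_lt. Qed.

Lemma cyclic_offK c : cancel (cyclic_off c) cyclic_dec.
Proof.
move=> e; apply: val_inj => /=.
by rewrite Zp_cast // (modn_small (cyclic_off_lt c e)) /= modnMDl modn_small.
Qed.

Lemma cyclic_off_disjoint c1 c2 e1 e2 : cyclic_off c1 e1 = cyclic_off c2 e2 -> c1 = c2.
Proof.
move/(congr1 val); rewrite !val_cyclic_off => -[/(congr1 (divn^~ s))].
by rewrite !divnMDl // !divn_small // !addn0 => /val_inj.
Qed.

Lemma cyclic_off_neq0 c e : cyclic_off c e != 0%R.
Proof. by rewrite -val_eqE val_cyclic_off. Qed.

End CyclicBlocks.

Theorem theorem4 (q z m t : nat) :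
  0 < q -> 0 < z -> 0 < m -> 0 < t ->
  2 <= q -> z < q -> t < m ->
  PDA_exists ('C(m, t) * q ^ t * ((q - 1) %/ (q - z)) ^ t)
             (q ^ m)
             (q ^ m - (q - z) ^ t * q ^ (m - t))
             ((q - z) ^ t * q ^ m).
Proof.
move=> _ z_gt0 _ _ q_gt1 lt_zq lt_tm.
have s_gt0 : 0 < q - z by rewrite subn_gt0.
have as_lt_q : (q - 1) %/ (q - z) * (q - z) < q.
  by rewrite (leq_ltn_trans (leq_trunc_div _ _)) // subn1 prednK // ltnW.
have a_gt0 : 0 < (q - 1) %/ (q - z) by rewrite divn_gt0 // leq_sub2l.
have := block_PDA_exists (I := 'I_m) (t := t) (cyclic_offK q_gt1 s_gt0 as_lt_q)
  (cyclic_off_disjoint q_gt1 s_gt0 as_lt_q) (cyclic_off_neq0 q_gt1 s_gt0 as_lt_q)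
  (Ordinal a_gt0).
by rewrite !card_ord Zp_cast //; apply; apply: ltnW.
Qed.
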